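(* Let $R$ be a commutative domain, $B=R(t,\sigma,H,J)$, assume $\sigma^n=\mathrm{id}_R$ and let $\mathcal O$ be a $\sigma$-orbit in $\operatorname{Maxspec}(R)$ of size $n$ containing no breaks. Let $M$ be a simple $B$-module which is an $R$-weight module with $\operatorname{Supp}_R(M)\subseteq\mathcal O$. Then for each $\mathfrak m\in\mathcal O$, $M_{\mathfrak m}$ is a simple $\Lambda_n/(\mathfrak m)$-module, and for all $i\in\mathbb Z$, $M_{\sigma^i(\mathfrak m)}\cong{}^{\sigma^i}M_{\mathfrak m}$ as $\Lambda_n/(\sigma^i(\mathfrak m))$-modules.
   Context: $\Bbbk$ is a field; all algebras are associative unital $\Bbbk$-algebras. For an algebra $R$ and $\sigma\in\operatorname{Aut}_\Bbbk(R)$, $R[t,t^{-1};\sigma]$ is the skew Laurent ring: generated over $R$ by $t,t^{-1}$ with $tt^{-1}=t^{-1}t=1$ and $t^{\pm1}r=\sigma^{\pm1}(r)t^{\pm1}$ for $r\in R$. Given two-sided ideals $H,J$ of $R$, set $I^{(0)}=R$, $I^{(n)}=J\sigma(J)\cdots\sigma^{n-1}(J)$ for $n\ge1$, and $I^{(n)}=\sigma^{-1}(H)\sigma^{-2}(H)\cdots\sigma^{n}(H)$ for $n\le-1$; it is assumed throughout that $I^{(n)}\neq0$ for all $n\in\mathbb Z$. The Bell–Rogalski (BR) algebra is $R(t,\sigma,H,J)=\bigoplus_{n\in\mathbb Z}I^{(n)}t^n\subseteq R[t,t^{-1};\sigma]$; $B_k=I^{(k)}t^k$. For $R$ commutative,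 $\mathcal S(B)=\{\mathfrak p\in\operatorname{Spec}(R):\mathfrak p\supseteq HJ\}$; a maximal ideal $\mathfrak m$ is a break if $\sigma(\mathfrak m)\in\mathcal S(B)$. A left $B$-module $M$ is an $R$-weight module if $M=\bigoplus_{\mathfrak m\in\operatorname{Maxspec}(R)}M_{\mathfrak m}$, $M_{\mathfrak m}=\{v:\mathfrak mv=0\}$, each $\dim_{R/\mathfrak m}M_{\mathfrak m}<\infty$. $\sigma$-orbits are orbits of $k\cdot\mathfrak m=\sigma^k(\mathfrak m)$. With $\sigma^n=\mathrm{id}$: $\Lambda_n=\bigoplus_{k\in\mathbb Z}B_{kn}$ (the $n$-th Veronese subalgebra); for $\mathfrak m\in\mathcal O$, $(\mathfrak m)=\mathfrak m\Lambda_n=\Lambda_n\mathfrak m$ is a two-sided ideal of $\Lambda_n$; $\sigma$ acts on $\Lambda_n$ by $\sigma(at^{kn})=\sigma(a)t^{kn}$, inducing $\Lambda_n/(\mathfrak m)\cong\Lambda_n/(\sigma^i(\mathfrak m))$. For a $\Lambda_n/(\mathfrak m)$-module $N$, ${}^{\sigma^i}N$ is the $\Lambda_n/(\sigma^i(\mathfrak m))$-module equal to $N$ as a set (elements written ${}^{\sigma^i}v$) with action $\lambda\cdot{}^{\sigma^i}v={}^{\sigma^i}(\sigma^{-i}(\lambda)v)$. *)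

From mathcomp Require Import all_boot all_order all_algebra.
From Stdlib Require List.
Set Implicit Arguments. Unset Strict Implicit. Unset Printing Implicit Defensive.
Import Order.TTheory GRing.Theory Num.Theory.
Local Open Scope ring_scope.

Section BR.
Variable (R : comNzRingType).

Definition is_ideal (I : R -> Prop) : Prop :=
  [/\ I 0, (forall a b, I a -> I b -> I (a + b)) & (forall r a, I a -> I (r * a))].

Definition is_maximal (m : R -> Prop) : Prop :=
  [/\ is_ideal m, ~ m 1 &
      forall I : R -> Prop, is_ideal I -> (forall x, m x -> I x) ->
        (forall x, I x -> m x) \/ I 1].

Definition seteq (X Y : R -> Prop) : Prop := forall x, X x <-> Y x.
Definition ssubset (X Y : R -> Prop) : Prop := forall x, X x -> Y x.

Definition fullI : R -> Prop := fun _ => True.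

Definition idmul (I J : R -> Prop) : R -> Prop := fun x =>
  exists s : seq (R * R), (forall p, p \in s -> I p.1 /\ J p.2) /\
                          x = \sum_(p <- s) p.1 * p.2.

Variables (sigma sigmainv : R -> R).

(* sigma^k as a map R -> R, k : int; sigmainv is the inverse of sigma *)
Definition sigpow (k : int) : R -> R :=
  match k with
  | Posz n => iter n sigma
  | Negz n => iter n.+1 sigmainv
  end.

(* sigma^k(X) = { sigma^k y | y in X } = { x | sigma^{-k} x in X } *)
Definition simg (k : int) (X : R -> Prop) : R -> Prop :=
  fun x => X (sigpow (- k) x).

Definition prodI (l : seq (R -> Prop)) : R -> Prop := foldr idmul fullI l.

Definition Ik (H J : R -> Prop) (k : int) : R -> Prop :=
  match k with
  | Posz n => prodI [seq simg (Posz j) J | j <- iota 0 n]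
  | Negz n => prodI [seq simg (- (Posz j.+1)) H | j <- iota 0 n.+1]
  end.

(* A left B-module, B = (+)_k I^(k) t^k, is given by the action
   act k a v = (a t^k) . v  for a in I^(k); module axioms: *)
Definition is_BR_module (H J : R -> Prop) (M : zmodType)
    (act : int -> R -> M -> M) : Prop :=
  [/\ (forall k a b v, Ik H J k a -> Ik H J k b ->
          act k (a + b) v = act k a v + act k b v),
      (forall k a v w, Ik H J k a -> act k a (v + w) = act k a v + act k a w),
      (forall v, act 0 1 v = v) &
      (forall k l a b v, Ik H J k a -> Ik H J l b ->
          act k a (act l b v) = act (k + l) (a * sigpow k b) v)].

(* the weight space M_m = { v | m v = 0 } (R = B_0 acts by act 0) *)
Definition wspace (M : zmodType) (act : int -> R -> M -> M)
    (m : R -> Prop) : M -> Prop :=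
  fun v => forall a, m a -> act 0 a v = 0.

Definition is_weight_module (M : zmodType) (act : int -> R -> M -> M) : Prop :=
  [/\
      (forall v : M, exists s : seq ((R -> Prop) * M),
          (forall p, List.In p s -> is_maximal p.1 /\ wspace act p.1 p.2) /\
          v = foldr (fun p acc => p.2 + acc) 0 s),
      (forall s : seq ((R -> Prop) * M),
          (forall p, List.In p s -> is_maximal p.1 /\ wspace act p.1 p.2) ->
          (forall i j, (i < size s)%N -> (j < size s)%N -> i <> j ->
              ~ seteq (List.nth i s (fullI, 0)).1 (List.nth j s (fullI, 0)).1) ->
          foldr (fun p acc => p.2 + acc) 0 s = 0 ->
          forall p, List.In p s -> p.2 = 0) &
      (* each M_m is finite-dimensional over R/m: finitely spanned *)
      (forall m, is_maximal m -> exists gens : seq M,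
          (forall g, List.In g gens -> wspace act m g) /\
          (forall w, wspace act m w -> exists cs : seq R,
              size cs = size gens /\
              w = foldr (fun p acc => act 0 p.1 p.2 + acc) 0 (zip cs gens)))].

Definition is_simple_B_module (H J : R -> Prop) (M : zmodType)
    (act : int -> R -> M -> M) : Prop :=
  (exists v : M, v <> 0) /\
  forall S : M -> Prop,
    S 0 -> (forall v w, S v -> S w -> S (v + w)) -> (forall v, S v -> S (- v)) ->
    (forall k a v, Ik H J k a -> S v -> S (act k a v)) ->
    (forall v, S v -> v = 0) \/ (forall v, S v).

(* W (a subset of M stable under Lambda_n = (+)_k B_{kn}) is a simple
   Lambda_n-module (equivalently Lambda_n/(m)-module when annihilated by m) *)
Definition is_simple_Lambda_module (H J : R -> Prop) (n : nat) (M : zmodType)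
    (act : int -> R -> M -> M) (W : M -> Prop) : Prop :=
  (exists v : M, W v /\ v <> 0) /\
  forall S : M -> Prop, (forall v, S v -> W v) ->
    S 0 -> (forall v w, S v -> S w -> S (v + w)) -> (forall v, S v -> S (- v)) ->
    (forall (k : int) a v, Ik H J (k * n%:Z) a -> S v -> S (act (k * n%:Z) a v)) ->
    (forall v, S v -> v = 0) \/ (forall v, W v -> S v).

(* M_{m'} ~= ^{sigma^i} M_m as Lambda_n-modules:
   f : ^{sigma^i}M_m -> M_{m'} additive bijection with
   f (sigma^{-i}(lam) . v) = lam . f v *)
Definition twisted_iso (H J : R -> Prop) (n : nat) (M : zmodType)
    (act : int -> R -> M -> M) (i : int) (W W' : M -> Prop) : Prop :=
  exists f : M -> M,
    [/\ (forall v, W v -> W' (f v)),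
        (forall v w, W v -> W w -> f (v + w) = f v + f w),
        (forall v w, W v -> W w -> f v = f w -> v = w),
        (forall w, W' w -> exists v, W v /\ f v = w) &
        (forall (k : int) a v, Ik H J (k * n%:Z) a -> W v ->
            f (act (k * n%:Z) (sigpow (- i) a) v) = act (k * n%:Z) a (f v))].

End BR.

From mathcomp Require Import all_boot all_order all_algebra.
From mathcomp Require Import zify ring.
From Stdlib Require Import Classical.
Set Implicit Arguments. Unset Strict Implicit. Unset Printing Implicit Defensive.
Import GRing.Theory.
Local Open Scope ring_scope.

(* If no point of the orbit is a break, every factor sigma^j(J), sigma^-j(H) of
   I^(k) contains an element outside any prescribed sigma^l(m); such an element
   is a unit modulo that maximal ideal and acts injectively on its weight space.
   So for every k some a in I^(k) maps a nonzero vector of M_m to a nonzero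
   vector of M_(sigma^k m), and all n weight spaces of the orbit are nonzero.

   If S is a nonzero Lambda_n-submodule of M_m, then B S = M by simplicity.
   Writing w in M_m as a sum of terms (a t^k) s with s in S, each term lies in
   M_(sigma^k m), which depends only on k mod n; these n weight spaces are
   distinct, so the directness of the weight decomposition leaves only the
   terms with n | k, and w lies in S.

   Finally pick c in I^(i) with (c t^i) M_m <> 0.  As sigma^n = id, the ideals
   I^(kn) are sigma-stable and v |-> (c t^i) v is sigma^i-semilinear over
   Lambda_n; its kernel is a proper submodule of the simple M_m and its image a
   nonzero submodule of the simple M_(sigma^i m). *)

Lemma In_map_inv (A : eqType) (B : Type) (f : A -> B) (s : seq A) y :
  List.In y (map f s) -> exists x, f x = y /\ x \in s.
Proof.
elim: s => [//|x s IH] /= [<-|/IH [x' [? ?]]]; first by exists x; rewrite inE eqxx.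
by exists x'; rewrite inE orbC; split => //; apply/orP; left.
Qed.

Lemma In_map_mem (A : eqType) (B : Type) (f : A -> B) (s : seq A) x :
  x \in s -> List.In (f x) (map f s).
Proof. by elim: s => [//|y s IH]; rewrite inE => /orP [/eqP <-|/IH]; [left|right]. Qed.

Lemma foldr_sum (T : Type) (V : nmodType) (s : seq (T * V)) :
  foldr (fun p acc => p.2 + acc) 0 s = \sum_(p <- s) p.2.
Proof. by elim: s => [|p s IH] /=; rewrite ?big_nil ?big_cons ?IH. Qed.

Lemma sum_iota_pred1 (V : nmodType) (x : V) r m :
  (r < m)%N -> \sum_(j <- iota 0 m | r == j) x = x.
Proof.
move=> ltrm; rewrite big_const_seq.
have -> : count (fun j => r == j) (iota 0 m) = 1%N.
  rewrite (eq_count (a2 := pred1 r)) => [|j]; last by rewrite /= eq_sym.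
  by rewrite count_uniq_mem ?iota_uniq // mem_iota ltrm.
by rewrite /= addr0.
Qed.

Lemma map_iota_addn (T : Type) (F : nat -> T) m n :
  [seq F j | j <- iota m n] = [seq F (m + j)%N | j <- iota 0 n].
Proof. by rewrite -{1}(addn0 m) iotaDl -map_comp. Qed.

Lemma List_nthE (T : Type) (s : seq T) i d : List.nth i s d = nth d s i.
Proof. by elim: s i => [|x s IH] [|i] //=. Qed.

Section IdealProducts.
Variable R : comNzRingType.
Implicit Types (I J K X Y : R -> Prop) (l : seq (R -> Prop)).

Lemma idmul0 I J : idmul I J 0.
Proof. by exists [::]; split => //; rewrite big_nil. Qed.

Lemma idmulD I J x y : idmul I J x -> idmul I J y -> idmul I J (x + y).
Proof.
move=> [s [Hs ->]] [t [Ht ->]]; exists (s ++ t); split; last by rewrite big_cat.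
by move=> p; rewrite mem_cat => /orP [/Hs|/Ht].
Qed.

Lemma idmul_mul I J a b : I a -> J b -> idmul I J (a * b).
Proof.
move=> Ia Jb; exists [:: (a, b)]; split; last by rewrite big_seq1.
by move=> p; rewrite inE => /eqP ->.
Qed.

Lemma idmul_ind I J (P : R -> Prop) : P 0 -> (forall x y, P x -> P y -> P (x + y)) ->
  (forall a b, I a -> J b -> P (a * b)) -> forall x, idmul I J x -> P x.
Proof.
move=> P0 PD PM x [s [Hs ->]]; elim: s Hs => [|p s IH] Hs; first by rewrite big_nil.
rewrite big_cons; apply: PD; last by apply: IH => q qs; apply: Hs; rewrite inE qs orbT.
by case: (Hs p); rewrite ?inE ?eqxx // => ? ?; apply: PM.
Qed.

Lemma idmulS I J I' J' : ssubset I I' -> ssubset J J' ->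
  ssubset (idmul I J) (idmul I' J').
Proof.
move=> sI sJ; apply: idmul_ind; [exact: idmul0|exact: idmulD|].
by move=> a b /sI ? /sJ ?; apply: idmul_mul.
Qed.

Lemma idmulC I J : ssubset (idmul I J) (idmul J I).
Proof.
apply: idmul_ind; [exact: idmul0|exact: idmulD|].
by move=> a b ? ?; rewrite mulrC; apply: idmul_mul.
Qed.

Lemma idmul_mulr I J r x : (forall r y, J y -> J (r * y)) ->
  idmul I J x -> idmul I J (r * x).
Proof.
move=> JM; apply: (@idmul_ind I J (fun x => idmul I J (r * x))).
- by rewrite mulr0; apply: idmul0.
- by move=> x1 x2 ? ?; rewrite mulrDr; apply: idmulD.
- by move=> a b ? ?; rewrite mulrCA; apply: idmul_mul => //; apply: JM.
Qed.

Lemma idmulA_l I J K : ssubset (idmul I (idmul J K)) (idmul (idmul I J) K).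
Proof.
apply: idmul_ind; [exact: idmul0|exact: idmulD|].
move=> a + Ia; apply: (@idmul_ind J K (fun y => idmul (idmul I J) K (a * y))).
- by rewrite mulr0; apply: idmul0.
- by move=> x z ? ?; rewrite mulrDr; apply: idmulD.
- by move=> b c ? ?; rewrite mulrA; apply: idmul_mul => //; apply: idmul_mul.
Qed.

Lemma idmulA_r I J K : ssubset (idmul (idmul I J) K) (idmul I (idmul J K)).
Proof.
apply: idmul_ind; [exact: idmul0|exact: idmulD|].
move=> y c + Kc; move: y.
apply: (@idmul_ind I J (fun y => idmul I (idmul J K) (y * c))).
- by rewrite mul0r; apply: idmul0.
- by move=> x z ? ?; rewrite mulrDl; apply: idmulD.
- by move=> a b ? ?; rewrite -mulrA; apply: idmul_mul => //; apply: idmul_mul.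
Qed.

Lemma prodI_mull l r x : prodI l x -> prodI l (r * x).
Proof. by elim: l r x => [//|X l IH] r x /=; apply: idmul_mulr => r' y /IH. Qed.

Lemma prodI0 l : prodI l 0.
Proof. by case: l => [//|X l]; apply: idmul0. Qed.

Lemma prodID l x y : prodI l x -> prodI l y -> prodI l (x + y).
Proof. by case: l => [//|X l]; apply: idmulD. Qed.

Lemma prodI_catl l1 l2 : ssubset (prodI (l1 ++ l2)) (prodI l1).
Proof. by elim: l1 => [//|X l1 IH] /=; exact: idmulS. Qed.

Lemma prodI_catr l1 l2 : ssubset (prodI (l1 ++ l2)) (prodI l2).
Proof.
elim: l1 => [//|X l1 IH] /=; apply: idmul_ind; [exact: prodI0|exact: prodID|].
by move=> a b _ /IH; apply: prodI_mull.
Qed.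

Lemma idmul_prodI_cat l1 l2 :
  ssubset (idmul (prodI l1) (prodI l2)) (prodI (l1 ++ l2)).
Proof.
elim: l1 => [|X l1 IH] /=; last by move=> x /idmulA_r; apply: idmulS.
apply: idmul_ind; [exact: prodI0|exact: prodID|].
by move=> a b _; apply: prodI_mull.
Qed.

Lemma prodI_cat_idmul l1 l2 :
  ssubset (prodI (l1 ++ l2)) (idmul (prodI l1) (prodI l2)).
Proof.
elim: l1 => [|X l1 IH] /= x Hx; first by rewrite -[x]mul1r; apply: idmul_mul.
by apply: idmulA_l; apply: idmulS Hx.
Qed.

Lemma prodI_catC l1 l2 : ssubset (prodI (l1 ++ l2)) (prodI (l2 ++ l1)).
Proof. by move=> x /prodI_cat_idmul /idmulC /idmul_prodI_cat. Qed.

Lemma prodI_catS l1 l2 l1' l2' :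
  ssubset (prodI l1) (prodI l1') -> ssubset (prodI l2) (prodI l2') ->
  ssubset (prodI (l1 ++ l2)) (prodI (l1' ++ l2')).
Proof. by move=> s1 s2 x /prodI_cat_idmul /(idmulS s1 s2) /idmul_prodI_cat. Qed.

Lemma prodI_mapS (T : Type) (f g : T -> R -> Prop) (s : seq T) :
  (forall j, ssubset (f j) (g j)) -> ssubset (prodI (map f s)) (prodI (map g s)).
Proof. by move=> sfg; elim: s => [//|j s IH] /=; exact: idmulS. Qed.

Lemma prodI_witness (P : R -> Prop) l : P 1 -> (forall x y, P x -> P y -> P (x * y)) ->
  (forall X, List.In X l -> exists2 x, X x & P x) -> exists2 x, prodI l x & P x.
Proof.
move=> P1 PM; elim: l => [|X l IH] hl; first by exists 1.
have [x Xx Px] := hl X (or_introl erefl).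
have [y ly Py] := IH (fun Y hY => hl Y (or_intror hY)).
by exists (x * y); [apply: idmul_mul|apply: PM].
Qed.

End IdealProducts.

Lemma int_ind_addr1 (P : int -> Prop) : P 0 -> (forall z, P z -> P (z + 1)) ->
  (forall z, P z -> P (z - 1)) -> forall z, P z.
Proof.
move=> P0 PS PP; elim/int_ind => [//|n /PS|n /PP]; rewrite -addn1 PoszD //.
by rewrite opprD.
Qed.

Section BRAlgebra.
Variable R : comNzRingType.
Variables (sigma : {rmorphism R -> R}) (sigmainv : R -> R).
Hypotheses (sK : cancel sigma sigmainv) (sK' : cancel sigmainv sigma).

Local Notation sp := (sigpow sigma sigmainv).
Local Notation sg := (simg sigma sigmainv).

(** * Powers of sigma *)

Lemma sigpowS z x : sp (z + 1) x = sigma (sp z x).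
Proof.
case: z => [n|[|n]]; first by rewrite -PoszD addn1.
  by rewrite /= sK'.
have -> : Negz n.+1 + 1 = Negz n by rewrite !NegzE; lia.
by rewrite /= sK'.
Qed.

Lemma sigpow_subr1 z x : sp (z - 1) x = sigmainv (sp z x).
Proof. by rewrite -{2}(subrK 1 z) sigpowS sK. Qed.

Lemma sigpowD a b x : sp (a + b) x = sp a (sp b x).
Proof.
elim/int_ind_addr1: a x => [x|z IH x|z IH x]; first by rewrite add0r.
  by rewrite addrAC sigpowS IH sigpowS.
by rewrite addrAC sigpow_subr1 IH sigpow_subr1.
Qed.

Lemma sigpowK a x : sp a (sp (- a) x) = x.
Proof. by rewrite -sigpowD subrr. Qed.

Lemma sigpowNK a x : sp (- a) (sp a x) = x.
Proof. by rewrite -sigpowD addNr. Qed.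

Lemma sigpow_rmorph z :
  [/\ forall x y, sp z (x * y) = sp z x * sp z y,
      forall x y, sp z (x + y) = sp z x + sp z y,
      sp z 1 = 1 & sp z 0 = 0].
Proof.
have invM x y : sigmainv (x * y) = sigmainv x * sigmainv y.
  by rewrite -{1}(sK' x) -{1}(sK' y) -rmorphM sK.
have invD x y : sigmainv (x + y) = sigmainv x + sigmainv y.
  by rewrite -{1}(sK' x) -{1}(sK' y) -rmorphD sK.
have inv1 : sigmainv 1 = 1 by rewrite -{1}(rmorph1 sigma) sK.
have inv0 : sigmainv 0 = 0 by rewrite -{1}(rmorph0 sigma) sK.
elim/int_ind_addr1: z => [|z [M D O Z]|z [M D O Z]]; first by [].
  by split=> *; rewrite !sigpowS ?M ?D ?O ?Z ?rmorphM ?rmorphD ?rmorph1 ?rmorph0.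
by split=> *; rewrite !sigpow_subr1 ?M ?D ?O ?Z ?invM ?invD ?inv1 ?inv0.
Qed.

Lemma sigpowrM z x y : sp z (x * y) = sp z x * sp z y.
Proof. by case: (sigpow_rmorph z). Qed.
Lemma sigpowrD z x y : sp z (x + y) = sp z x + sp z y.
Proof. by case: (sigpow_rmorph z). Qed.
Lemma sigpowr1 z : sp z 1 = 1.
Proof. by case: (sigpow_rmorph z). Qed.
Lemma sigpowr0 z : sp z 0 = 0.
Proof. by case: (sigpow_rmorph z). Qed.

Lemma simgD a b X : seteq (sg a (sg b X)) (sg (a + b) X).
Proof. by move=> x; rewrite /simg -sigpowD opprD addrC. Qed.

Lemma simg_seteq c X Y : seteq X Y -> seteq (sg c X) (sg c Y).
Proof. by move=> eXY x; rewrite /simg. Qed.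

Lemma simg_sigpow c X a : X a -> sg c X (sp c a).
Proof. by rewrite /simg sigpowNK. Qed.

Lemma simg_ideal c X : is_ideal X -> is_ideal (sg c X).
Proof.
case=> X0 XD XM; split; rewrite /simg.
- by rewrite sigpowr0.
- by move=> a b ? ?; rewrite sigpowrD; apply: XD.
- by move=> r a ?; rewrite sigpowrM; apply: XM.
Qed.

Lemma simg_maximal c X : is_maximal X -> is_maximal (sg c X).
Proof.
case=> idX X1 Xmax; split; [exact: simg_ideal|by rewrite /simg sigpowr1|].
move=> I idI sXI; case: (Xmax (sg (- c) I) (simg_ideal (- c) idI)).
- by move=> x Xx; rewrite /simg opprK; apply: sXI; rewrite /simg sigpowNK.
- by move=> sIX; left=> y Iy; apply: sIX; rewrite /simg opprK sigpowK.
- by rewrite /simg sigpowr1; right.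
Qed.

Lemma sigpow_prodI c (l : seq (R -> Prop)) x :
  prodI l x -> prodI (map (sg c) l) (sp c x).
Proof.
elim: l x => [//|X l IH] /=.
apply: (@idmul_ind _ X (prodI l) (fun x => idmul (sg c X) _ (sp c x))).
- by rewrite sigpowr0; apply: idmul0.
- by move=> x y ? ?; rewrite sigpowrD; apply: idmulD.
- by move=> a b ? ?; rewrite sigpowrM; apply: idmul_mul; [apply: simg_sigpow|apply: IH].
Qed.

Lemma sigpow_prodI_simg c X (f g : nat -> int) (s : seq nat) x :
  (forall j, c + f j = g j) -> prodI [seq sg (f j) X | j <- s] x ->
  prodI [seq sg (g j) X | j <- s] (sp c x).
Proof.
move=> efg /(sigpow_prodI c); rewrite -map_comp; apply: prodI_mapS => j y /=.
by move/simgD; rewrite efg.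
Qed.

(** * The ideals I^(k) *)

Variables H J : R -> Prop.

Local Notation Ik := (Ik sigma sigmainv H J).

(* [Ipos N] is I^(N) and [Ineg N] is I^(-N). *)
Definition Ipos N := prodI [seq sg (Posz j) J | j <- iota 0 N].
Definition Ineg N := prodI [seq sg (- Posz j.+1) H | j <- iota 0 N].

Lemma Ik_Posz N x : Ik (Posz N) x = Ipos N x. Proof. by []. Qed.
Lemma Ik_Negz N x : Ik (Negz N) x = Ineg N.+1 x. Proof. by []. Qed.

Lemma IposD a b : Ipos (a + b) =
  prodI ([seq sg (Posz j) J | j <- iota 0 a] ++ [seq sg (Posz (a + j)) J | j <- iota 0 b]).
Proof. by rewrite /Ipos iotaD add0n map_cat (@map_iota_addn _ _ a). Qed.

Lemma InegD a b : Ineg (a + b) =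
  prodI ([seq sg (- Posz j.+1) H | j <- iota 0 a] ++
         [seq sg (- Posz (a + j).+1) H | j <- iota 0 b]).
Proof. by rewrite /Ineg iotaD add0n map_cat (@map_iota_addn _ _ a). Qed.

Lemma IkM_pos_neg p q a b : Ipos p a -> Ineg q.+1 b ->
  Ik (Posz p + Negz q) (a * sp p b).
Proof.
move=> Ja Hb; case: (leqP q.+1 p) => hqp.
  have -> : Posz p + Negz q = Posz (p - q.+1) by rewrite NegzE; lia.
  rewrite Ik_Posz mulrC; apply: prodI_mull.
  apply: (@prodI_catl _ _ [seq sg (Posz (p - q.+1 + j)) J | j <- iota 0 q.+1]).
  by rewrite -IposD subnK.
have -> : Posz p + Negz q = Negz (q - p) by rewrite NegzE; lia.
rewrite Ik_Negz; apply: prodI_mull; move: Hb.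
have -> : q.+1 = (p + (q - p).+1)%N by lia.
rewrite InegD => /(sigpow_prodI p); rewrite map_cat => /prodI_catr.
rewrite -map_comp; apply: prodI_mapS => j x /= /simgD.
by have -> : Posz p - Posz (p + j).+1 = - Posz j.+1 by lia.
Qed.

Lemma IkM_neg_pos p q a b : Ineg p.+1 a -> Ipos q b ->
  Ik (Negz p + Posz q) (a * sp (Negz p) b).
Proof.
move=> Ha Jb; case: (leqP p.+1 q) => hpq.
  have -> : Negz p + Posz q = Posz (q - p.+1) by rewrite NegzE; lia.
  rewrite Ik_Posz; apply: prodI_mull; move: Jb; rewrite -{1}(subnKC hpq) IposD.
  move=> /(sigpow_prodI (Negz p)); rewrite map_cat => /prodI_catr.
  rewrite -map_comp; apply: prodI_mapS => j x /= /simgD.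
  by have -> : Negz p + Posz (p.+1 + j) = Posz j by rewrite NegzE; lia.
have -> : Negz p + Posz q = Negz (p - q) by rewrite NegzE; lia.
rewrite Ik_Negz mulrC; apply: prodI_mull.
apply: (@prodI_catl _ _ [seq sg (- Posz ((p - q).+1 + j).+1) H | j <- iota 0 q]).
by rewrite -InegD; have -> : ((p - q).+1 + q = p.+1)%N by lia.
Qed.

Lemma IkM z w a b : Ik z a -> Ik w b -> Ik (z + w) (a * sp z b).
Proof.
case: z => p; case: w => q; rewrite ?Ik_Posz ?Ik_Negz => Ha Hb.
- rewrite IposD; apply: idmul_prodI_cat; apply: idmul_mul => //.
  by apply: (sigpow_prodI_simg (f := Posz)) Hb => j; rewrite PoszD.
- exact: IkM_pos_neg.
- exact: IkM_neg_pos.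
- rewrite -addnS -addSn InegD; apply: idmul_prodI_cat; apply: idmul_mul => //.
  apply: (sigpow_prodI_simg (f := fun j => - Posz j.+1)) Hb => j.
  by rewrite NegzE; lia.
Qed.

Variable n : nat.
Hypotheses (n_gt0 : (0 < n)%N) (sigma_n : forall x, iter n sigma x = x).

Lemma sigpow_period (z : int) x : sp (z * n) x = x.
Proof.
move: x; elim/int_ind_addr1: z => [x|z IH x|z IH x]; first by rewrite mul0r.
  by rewrite mulrDl mul1r sigpowD IH; apply: sigma_n.
by rewrite mulrBl mul1r sigpowD IH -[RHS](sigpowK n x) [sp n _]sigma_n.
Qed.

Lemma simg_period a (z : int) X : seteq (sg (a + z * n) X) (sg a X).
Proof. by move=> x; rewrite /simg opprD -mulNr sigpowD sigpow_period. Qed.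

Lemma simg_modz a b X : (a %% n = b %% n)%Z -> seteq (sg a X) (sg b X).
Proof.
move=> eab x; rewrite (divz_eq a n) (divz_eq b n) eab addrC.
by rewrite (simg_period _ _ X x) addrC (simg_period _ _ X x).
Qed.

Lemma sigpow_modz z x : sp z x = sp `|(z %% n)%Z|%N x.
Proof.
rewrite gez0_abs ?modz_ge0 -?lt0n // {1}(divz_eq z n) addrC.
by rewrite sigpowD sigpow_period.
Qed.

Lemma Ik_period_sigma (z : int) x : Ik (z * n) x -> Ik (z * n) (sp 1 x).
Proof.
(* sigma rotates the factors of I^(zn) cyclically, since sigma^(zn) = id. *)
have shift (w : int) c X j y : c = j + w * n -> sg c X y -> sg j X y.
  by move=> -> /simg_period.
case E: (z * n) => [N|N].
  case: N E => [//|N] E; rewrite !Ik_Posz => Jx; rewrite -add1n IposD.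
  move: Jx; rewrite -addn1 IposD => /(sigpow_prodI 1); rewrite map_cat => /prodI_catC.
  apply: prodI_catS; rewrite -map_comp; apply: prodI_mapS => j y /simgD /=.
    by apply: (shift z); rewrite E; lia.
  by rewrite PoszD.
rewrite !Ik_Negz => Hx; rewrite -addn1 InegD.
move: Hx; rewrite -add1n InegD => /(sigpow_prodI 1).
rewrite map_cat => /prodI_catC; apply: prodI_catS; rewrite -map_comp.
  by apply: prodI_mapS => j y /simgD /=; congr (sg _ H y); lia.
apply: prodI_mapS => j y /simgD /=; apply: (shift (- z)).
by rewrite mulNr E; lia.
Qed.

Lemma Ik_period_sigpow (z i : int) x : Ik (z * n) x -> Ik (z * n) (sp i x).
Proof.
by move=> Ix; rewrite sigpow_modz; elim: `|_|%N => [//|j /Ik_period_sigma].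
Qed.

(** * B-modules and weight spaces *)

Variables (M : zmodType) (act : int -> R -> M -> M).
Hypothesis Mmod : is_BR_module sigma sigmainv H J act.

Local Notation W X := (wspace act X).

Lemma actDl z a b v : Ik z a -> Ik z b -> act z (a + b) v = act z a v + act z b v.
Proof. by case: Mmod => + _ _ _; apply. Qed.

Lemma actDr z a v w : Ik z a -> act z a (v + w) = act z a v + act z a w.
Proof. by case: Mmod => _ + _ _; apply. Qed.

Lemma act1 v : act 0 1 v = v.
Proof. by case: Mmod => _ _ + _; apply. Qed.

Lemma act_comp z l a b v : Ik z a -> Ik l b ->
  act z a (act l b v) = act (z + l) (a * sp z b) v.
Proof. by case: Mmod => _ _ _; apply. Qed.

Lemma act0_comp a b v : act 0 a (act 0 b v) = act 0 (a * b) v.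
Proof. by rewrite act_comp // add0r. Qed.

Lemma actr0 z a : Ik z a -> act z a 0 = 0.
Proof. by move=> Ia; apply: (addrI (act z a 0)); rewrite -actDr // !addr0. Qed.

Lemma actrN z a v : Ik z a -> act z a (- v) = - act z a v.
Proof. by move=> Ia; apply/eqP; rewrite -addr_eq0 -actDr // addNr actr0. Qed.

Lemma wspace_seteq X Y v : seteq X Y -> W X v <-> W Y v.
Proof. by move=> eXY; split => Wv a /eXY; apply: Wv. Qed.

Lemma wspace0 X : W X 0.
Proof. by move=> a _; apply: actr0. Qed.

Lemma wspaceD X v w : W X v -> W X w -> W X (v + w).
Proof. by move=> Wv Ww a Xa; rewrite actDr // Wv // Ww // addr0. Qed.

Lemma wspaceN X v : W X v -> W X (- v).
Proof. by move=> Wv a Xa; rewrite actrN // Wv // oppr0. Qed.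

Lemma wspace_act0 X a v : W X v -> W X (act 0 a v).
Proof. by move=> Wv b Xb; rewrite act0_comp mulrC -act0_comp Wv // actr0. Qed.

Lemma wspace_act X z a v : W X v -> Ik z a -> W (sg z X) (act z a v).
Proof.
move=> Wv Ia r Xr; rewrite act_comp // add0r [sp 0 a]/= mulrC.
have <- : act z a (act 0 (sp (- z) r) v) = act z (a * r) v.
  by rewrite act_comp // addr0 sigpowK.
by rewrite Wv // actr0.
Qed.

Lemma wspace_act_simg X c z a v : W (sg c X) v -> Ik z a -> W (sg (z + c) X) (act z a v).
Proof. by move=> Wv Ia; apply/(wspace_seteq _ (simgD z c X)); apply: wspace_act. Qed.

Lemma wspace_act_period X c (k : int) a u :
  W (sg c X) u -> Ik (k * n) a -> W (sg c X) (act (k * n) a u).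
Proof.
move=> Wu Ia; apply/(wspace_seteq _ (simg_period c k X)).
by rewrite addrC; apply: wspace_act_simg.
Qed.

Lemma act_twist (k j : int) a c v : Ik (k * n) a -> Ik j c ->
  act j c (act (k * n) (sp (- j) a) v) = act (k * n) a (act j c v).
Proof.
move=> Ia Ic; have Ia' := Ik_period_sigpow (- j) Ia.
by rewrite !act_comp // sigpowK sigpow_period addrC [c * _]mulrC.
Qed.

Lemma simple_Lambda_module_seteq (W1 W2 : M -> Prop) : (forall v, W1 v <-> W2 v) ->
  is_simple_Lambda_module sigma sigmainv H J n act W1 ->
  is_simple_Lambda_module sigma sigmainv H J n act W2.
Proof.
move=> eW [[v [W1v v_neq0]] simple]; split; first by exists v; split => //; apply/eW.
move=> S SW S0 SD SN SL; have SW1 v' : S v' -> W1 v' by move/SW/eW.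
by case: (simple S SW1 S0 SD SN SL) => [|S_full]; [left|right=> u /eW /S_full].
Qed.

Lemma twisted_iso_seteq i (W1 W2 W1' W2' : M -> Prop) :
  (forall v, W1 v <-> W1' v) -> (forall v, W2 v <-> W2' v) ->
  twisted_iso sigma sigmainv H J n act i W1 W2 ->
  twisted_iso sigma sigmainv H J n act i W1' W2'.
Proof.
move=> e1 e2 [f [f12 fD finj fsurj ftw]]; exists f; split.
- by move=> v /e1 /f12 /e2.
- by move=> v w /e1 W1v /e1 W1w; apply: fD.
- by move=> v w /e1 W1v /e1 W1w; apply: finj.
- by move=> w /e2 /fsurj [v [W1v <-]]; exists v; split => //; apply/e1.
- by move=> k a v Ia /e1; apply: ftw.
Qed.

Definition weight_injective X x := forall v, W X v -> act 0 x v = 0 -> v = 0.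

Lemma weight_injective1 X : weight_injective X 1.
Proof. by move=> v _; rewrite act1. Qed.

Lemma weight_injectiveM X x y :
  weight_injective X x -> weight_injective X y -> weight_injective X (x * y).
Proof.
move=> ix iy v Wv; rewrite -act0_comp => /ix xv; apply: iy => //.
by apply: xv; apply: wspace_act0.
Qed.

Lemma maximal_weight_injective X x : is_maximal X -> ~ X x -> weight_injective X x.
Proof.
case=> [[X0 XD XM] X1 Xmax] Xx v Wv xv.
(* X + R x is the unit ideal, so 1 = s + r x with s in X. *)
pose I y := exists r s, X s /\ y = s + r * x.
have idI : is_ideal I.
  split.
  - by exists 0, 0; split => //; rewrite mul0r addr0.
  - move=> a b [r [s [Xs ->]]] [r' [s' [Xs' ->]]].
    by exists (r + r'), (s + s'); split; [apply: XD|ring].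
  - by move=> r' a [r [s [Xs ->]]]; exists (r' * r), (r' * s); split; [apply: XM|ring].
case: (Xmax I idI).
- by move=> s Xs; exists 0, s; split => //; rewrite mul0r addr0.
- by move=> /(_ x) IX; case: Xx; apply: IX; exists 1, 0; rewrite mul1r add0r.
move=> [r [s [Xs e]]].
by rewrite -(act1 v) e actDl // Wv // add0r -act0_comp xv actr0.
Qed.

Definition Bspan (S : M -> Prop) x := exists2 L : seq ((int * R) * M),
  (forall p, p \in L -> Ik p.1.1 p.1.2 /\ S p.2) & x = \sum_(p <- L) act p.1.1 p.1.2 p.2.

Lemma Bspan_ind (S P : M -> Prop) : P 0 -> (forall x y, P x -> P y -> P (x + y)) ->
  (forall z a s, Ik z a -> S s -> P (act z a s)) -> forall x, Bspan S x -> P x.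
Proof.
move=> P0 PD Pact x [L LS ->]; rewrite big_seq; apply: big_ind => // p Lp.
by have [Ia Sp] := LS p Lp; apply: Pact.
Qed.

Lemma Bspan0 S : Bspan S 0.
Proof. by exists [::]; rewrite ?big_nil. Qed.

Lemma BspanD S x y : Bspan S x -> Bspan S y -> Bspan S (x + y).
Proof.
move=> [L1 LS1 ->] [L2 LS2 ->]; exists (L1 ++ L2); last by rewrite big_cat.
by move=> p; rewrite mem_cat => /orP [/LS1|/LS2].
Qed.

Lemma Bspan_gen S z a s : Ik z a -> S s -> Bspan S (act z a s).
Proof.
move=> Ia Ss; exists [:: (z, a, s)]; last by rewrite big_seq1.
by move=> p; rewrite inE => /eqP ->.
Qed.

Lemma BspanN S x : (forall v, S v -> S (- v)) -> Bspan S x -> Bspan S (- x).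
Proof.
move=> SN; move: x.
apply: (@Bspan_ind S (fun x => Bspan S (- x))) => [|x1 x2|z a s Ia Ss].
- by rewrite oppr0; apply: Bspan0.
- by rewrite opprD; apply: BspanD.
- by rewrite -actrN //; apply: Bspan_gen => //; apply: SN.
Qed.

Lemma Bspan_act S z a x : Ik z a -> Bspan S x -> Bspan S (act z a x).
Proof.
move=> Ia; move: x.
apply: (@Bspan_ind S (fun x => Bspan S (act z a x))) => [|x1 x2|l b s Ib Ss].
- by rewrite actr0 //; apply: Bspan0.
- by rewrite actDr //; apply: BspanD.
- by rewrite act_comp //; apply: Bspan_gen => //; apply: IkM.
Qed.

(** * Weight spaces along a break-free orbit *)

Hypotheses (HH : is_ideal H) (HJ : is_ideal J).
Variable m0 : R -> Prop.
Hypothesis m0_max : is_maximal m0.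
Hypothesis no_breaks : forall z : int, ~ ssubset (idmul H J) (sg 1 (sg z m0)).

Lemma not_break_witness c : exists2 y, H y /\ J y & ~ sg c m0 y.
Proof.
have [x] := not_all_ex_not _ _ (no_breaks (z := c - 1)).
move=> nsub; have [HJx nx] := imply_to_and _ _ nsub; exists x.
  case: HH HJ => H0 HD HM [J0 JD JM]; move: x HJx {nx nsub}; apply: idmul_ind => //.
  - by move=> x y [? ?] [? ?]; split; [apply: HD|apply: JD].
  - by move=> a b Ha Jb; split; [rewrite mulrC; apply: HM|apply: JM].
by move=> cx; apply/nx/(simgD 1 (c - 1) m0 x); rewrite addrC subrK.
Qed.

Lemma Ik_weight_injective (z' z d : int) :
  exists2 a, Ik z a & weight_injective (sg z' m0) (sp d a).
Proof.
have factor (X : R -> Prop) j : (forall c, exists2 y, X y & ~ sg c m0 y) ->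
    exists2 x, sg j X x & weight_injective (sg z' m0) (sp d x).
  move=> avoid; have [y Xy ny] := avoid (z' - d - j).
  exists (sp j y); first exact: simg_sigpow.
  apply: maximal_weight_injective; first exact: simg_maximal.
  rewrite /simg -!sigpowD => m0y; apply: ny; rewrite /simg.
  by have -> : - (z' - d - j) = - z' + d + j by lia.
have avoidH c : exists2 y, H y & ~ sg c m0 y.
  by have [y [? _] ?] := not_break_witness c; exists y.
have avoidJ c : exists2 y, J y & ~ sg c m0 y.
  by have [y [_ ?] ?] := not_break_witness c; exists y.
case: z => N; apply: (@prodI_witness _ (fun x => weight_injective (sg z' m0) (sp d x)))
  => [|x y|X inX]; rewrite ?sigpowr1 ?sigpowrM.
1,4: exact: weight_injective1.
1,3: exact: weight_injectiveM.
all: by have [j [<- _]] := In_map_inv inX; apply: factor.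
Qed.

Lemma Ik_act_neq0 z' v : W (sg z' m0) v -> v <> 0 ->
  forall z, exists2 a, Ik z a & act z a v <> 0.
Proof.
move=> Wv v_neq0 z; have [a Ia inj_a] := Ik_weight_injective z' z (- z).
have [b Ib inj_b] := Ik_weight_injective z' (- z) 0.
exists a => // av0; apply: v_neq0; apply: inj_a => //; apply: inj_b.
  exact: wspace_act0.
by rewrite act0_comp; have := act_comp v Ib Ia; rewrite av0 actr0 // addNr.
Qed.

Hypothesis Msimple : is_simple_B_module sigma sigmainv H J act.
Hypothesis Mweight : is_weight_module act.
Hypothesis Msupp : forall m, is_maximal m -> (exists v, W m v /\ v <> 0) ->
  exists z : int, seteq m (sg z m0).

Lemma orbit_weight_neq0 z : exists v, W (sg z m0) v /\ v <> 0.
Proof.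
case: Msimple => [[v v_neq0] _]; case: Mweight => [decomp _ _].
have [s [Ws ev]] := decomp v.
have [p [ps p_neq0]] : exists p, List.In p s /\ p.2 <> 0.
  move: v_neq0; rewrite ev; elim: s {Ws ev} => [//|q s IH] /=.
  have [->|q_neq0] := eqVneq q.2 0; last by exists q; split; [left|apply/eqP].
  by rewrite add0r => /IH [p [? ?]]; exists p; split; [right|].
have [maxp Wp] := Ws p ps.
have [z' ez'] := Msupp maxp (ex_intro _ p.2 (conj Wp p_neq0)).
have {}Wp : W (sg z' m0) p.2 by apply/(wspace_seteq _ ez').
have [a Ia ap] := Ik_act_neq0 Wp p_neq0 (z - z').
exists (act (z - z') a p.2); split => //.
by have := wspace_act_simg Wp Ia; rewrite subrK.
Qed.

Hypothesis orbit_size : forall i j : nat, (i < n)%N -> (j < n)%N ->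
  seteq (sg (Posz i) m0) (sg (Posz j) m0) -> i = j.

Lemma orbit_simg_neq z (i j : nat) : (i < n)%N -> (j < n)%N -> i <> j ->
  ~ seteq (sg (z + Posz i) m0) (sg (z + Posz j) m0).
Proof.
move=> ltin ltjn neqij eij; apply/neqij/orbit_size => // x.
have shift (c : nat) : sg c m0 x <-> sg (- z) (sg (z + Posz c) m0) x.
  by rewrite (simgD (- z) (z + Posz c) m0 x) addKr.
by rewrite shift (simg_seteq (- z) eij x) -shift.
Qed.

Lemma orbit_weight_sum_eq0 z (y : nat -> M) :
  (forall r, (r < n)%N -> W (sg (z + Posz r) m0) (y r)) ->
  \sum_(r <- iota 0 n) y r = 0 -> forall r, (r < n)%N -> y r = 0.
Proof.
move=> Wy sum0 r ltrn; case: Mweight => _ direct _.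
pose s := [seq (sg (z + Posz i) m0, y i) | i <- iota 0 n].
apply: (direct s _ _ _ (sg (z + Posz r) m0, y r)).
- move=> p ps; have [i [<-]] := In_map_inv ps; rewrite mem_iota add0n => /andP [_ ltin].
  by split; [apply: simg_maximal|apply: Wy].
- move=> i j; rewrite size_map size_iota !List_nthE => ltin ltjn.
  by rewrite !(nth_map 0%N) ?size_iota // !nth_iota //; apply: orbit_simg_neq.
- by rewrite foldr_sum big_map.
- by apply: (In_map_mem (fun i => (sg (z + Posz i) m0, y i))); rewrite mem_iota.
Qed.

Lemma orbit_weight_sum_component z (y : nat -> M) w :
  (forall r, (r < n)%N -> W (sg (z + Posz r) m0) (y r)) -> W (sg z m0) w ->
  w = \sum_(r <- iota 0 n) y r -> w = y 0%N.
Proof.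
move=> Wy Ww ew; apply/eqP; rewrite eq_sym -subr_eq0; apply/eqP.
pose y' r := if r == 0%N then y 0%N - w else y r.
have [n' En] : exists n', n = n'.+1 by exists n.-1; rewrite prednK.
apply: (@orbit_weight_sum_eq0 z y' _ _ 0%N n_gt0).
  move=> r ltrn; rewrite /y'; case: eqP => [->|_]; last exact: Wy.
  by apply: wspaceD; [apply: Wy|apply: wspaceN; rewrite addr0].
rewrite En -[iota 0 n'.+1]/(0%N :: iota 1 n') big_cons in ew *.
rewrite /y' big_cons /= (eq_big_seq y) => [|r].
  by rewrite ew opprD addrA subrr add0r addNr.
by rewrite mem_iota => /andP [ltr _]; case: eqP ltr => // ->.
Qed.

Definition residue (k : int) : nat := `|(k %% n)%Z|%N.

Lemma residueE k : Posz (residue k) = (k %% n)%Z.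
Proof. by rewrite /residue gez0_abs // modz_ge0 // -lt0n. Qed.

Lemma residue_lt k : (residue k < n)%N.
Proof. by rewrite -ltz_nat residueE ltz_pmod // ltz_nat. Qed.

Lemma orbit_weight_Lambda_part z (L : seq ((int * R) * M)) w :
  (forall p, p \in L -> Ik p.1.1 p.1.2 /\ W (sg z m0) p.2) ->
  W (sg z m0) w -> w = \sum_(p <- L) act p.1.1 p.1.2 p.2 ->
  w = \sum_(p <- L | residue p.1.1 == 0%N) act p.1.1 p.1.2 p.2.
Proof.
(* The terms whose degree is r mod n add up to a vector of M_(sigma^(z+r) m0). *)
move=> WL Ww ew; pose F (p : (int * R) * M) := act p.1.1 p.1.2 p.2.
apply: (@orbit_weight_sum_component z (fun r => \sum_(p <- L | residue p.1.1 == r) F p)) => //.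
  move=> r _; rewrite big_seq_cond.
  apply: big_ind => [|x y|p /andP [Lp /eqP <-]]; [exact: wspace0|exact: wspaceD|].
  have [Ia Wp] := WL p Lp.
  have e : ((p.1.1 + z) %% n = (z + residue p.1.1) %% n)%Z.
    by rewrite residueE modzDmr addrC.
  exact/(wspace_seteq _ (simg_modz m0 e))/wspace_act_simg.
rewrite ew (exchange_big_dep xpredT) //=; apply: eq_bigr => p _.
by rewrite sum_iota_pred1 ?residue_lt.
Qed.

Lemma Bspan_full S v : (forall v, S v -> S (- v)) -> S v -> v <> 0 ->
  forall x, Bspan S x.
Proof.
move=> SN Sv v_neq0; case: Msimple => _ simple.
have [span0|//] := simple (Bspan S) (Bspan0 S) (@BspanD S) (fun x => BspanN SN)
  (fun z a x Ia => Bspan_act Ia).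
by case: v_neq0; apply: span0; rewrite -(act1 v); apply: Bspan_gen.
Qed.

Lemma orbit_weight_simple z :
  is_simple_Lambda_module sigma sigmainv H J n act (W (sg z m0)).
Proof.
split; first by have [v [Wv v_neq0]] := orbit_weight_neq0 z; exists v.
move=> S SW S0 SD SN SL.
have [S_nz|S0'] := classic (exists2 v, S v & v <> 0); last first.
  by left=> v Sv; apply: NNPP => v_neq0; apply: S0'; exists v.
right=> w Ww; have [v Sv v_neq0] := S_nz; have [L LS ew] := Bspan_full SN Sv v_neq0 w.
rewrite (orbit_weight_Lambda_part _ Ww ew) => [|p Lp]; last first.
  by have [Ia Sp] := LS p Lp; split => //; apply: SW.
rewrite big_seq_cond; apply: big_ind => [|x y|p /andP [Lp /eqP r0]]; [exact: S0|exact: SD|].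
have [Ia Sp] := LS p Lp; have Ep : p.1.1 = (p.1.1 %/ n)%Z * n.
  by rewrite {1}(divz_eq p.1.1 n) -residueE r0 addr0.
by rewrite Ep; apply: SL => //; rewrite -Ep.
Qed.

Section TwistedMap.
Variables (z i : int) (c : R).
Hypothesis Ic : Ik i c.
Hypothesis c_neq0 : exists2 v, W (sg z m0) v & act i c v <> 0.

Lemma twisted_map_injective v w : W (sg z m0) v -> W (sg z m0) w ->
  act i c v = act i c w -> v = w.
Proof.
move=> Wv Ww evw; pose K u := W (sg z m0) u /\ act i c u = 0.
have K0 : K 0 by split; [apply: wspace0|apply: actr0].
have KD u u' : K u -> K u' -> K (u + u').
  by move=> [Wu cu] [Wu' cu']; split; [apply: wspaceD|rewrite actDr // cu cu' addr0].
have KN u : K u -> K (- u).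
  by move=> [Wu cu]; split; [apply: wspaceN|rewrite actrN // cu oppr0].
have KL (k : int) a u : Ik (k * n) a -> K u -> K (act (k * n) a u).
  move=> Ia [Wu cu]; split; first exact: wspace_act_period.
  by rewrite -[a](sigpowNK i) act_twist ?cu ?actr0 //; apply: Ik_period_sigpow.
case: ((orbit_weight_simple z).2 K (fun u => @proj1 _ _) K0 KD KN KL) => [K_eq0|K_full].
  apply/eqP; rewrite -subr_eq0; apply/eqP/K_eq0; split.
    by apply: wspaceD => //; apply: wspaceN.
  by rewrite actDr // actrN // evw subrr.
by have [v1 Wv1 cv1] := c_neq0; case: cv1; have [] := K_full v1 Wv1.
Qed.

Lemma twisted_map_surjective w : W (sg i (sg z m0)) w ->
  exists v, W (sg z m0) v /\ act i c v = w.
Proof.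
pose Im u := exists v, W (sg z m0) v /\ act i c v = u.
have simple : is_simple_Lambda_module sigma sigmainv H J n act (W (sg i (sg z m0))).
  apply: (simple_Lambda_module_seteq _ (orbit_weight_simple (i + z))) => v.
  exact: iff_sym (wspace_seteq v (simgD i z m0)).
have ImW u : Im u -> W (sg i (sg z m0)) u by move=> [v [Wv <-]]; apply: wspace_act.
have Im0 : Im 0 by exists 0; split; [apply: wspace0|apply: actr0].
have ImD u u' : Im u -> Im u' -> Im (u + u').
  by move=> [v [Wv <-]] [v' [Wv' <-]]; exists (v + v'); split; [apply: wspaceD|rewrite actDr].
have ImN u : Im u -> Im (- u).
  by move=> [v [Wv <-]]; exists (- v); split; [apply: wspaceN|rewrite actrN].
have ImL (k : int) a u : Ik (k * n) a -> Im u -> Im (act (k * n) a u).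
  move=> Ia [v [Wv <-]]; exists (act (k * n) (sp (- i) a) v).
  have Ia' := Ik_period_sigpow (- i) Ia.
  by split; [exact: wspace_act_period|exact: act_twist].
case: (simple.2 Im ImW Im0 ImD ImN ImL) => [Im_eq0|Im_full]; last exact: Im_full.
by have [v1 Wv1 cv1] := c_neq0; case: cv1; apply: Im_eq0; exists v1.
Qed.

End TwistedMap.

Lemma orbit_weight_twisted_iso z i :
  twisted_iso sigma sigmainv H J n act i (W (sg z m0)) (W (sg i (sg z m0))).
Proof.
have [v [Wv v_neq0]] := orbit_weight_neq0 z.
have [c Ic cv] := Ik_act_neq0 Wv v_neq0 i.
have c_neq0 : exists2 v, W (sg z m0) v & act i c v <> 0 by exists v.
exists (act i c); split.
- by move=> u Wu; apply: wspace_act.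
- by move=> u w _ _; apply: actDr.
- exact: twisted_map_injective.
- exact: twisted_map_surjective.
- by move=> k a u Ia _; apply: act_twist.
Qed.

Lemma orbit_weight_structure m : (exists z : int, seteq m (sg z m0)) ->
  is_simple_Lambda_module sigma sigmainv H J n act (W m) /\
  forall i : int, twisted_iso sigma sigmainv H J n act i (W m) (W (sg i m)).
Proof.
move=> [z ezm]; have eW v : W (sg z m0) v <-> W m v.
  by apply: wspace_seteq => x; split => /ezm.
split; first exact: simple_Lambda_module_seteq eW (orbit_weight_simple z).
move=> i; apply: twisted_iso_seteq eW _ (orbit_weight_twisted_iso z i) => v.
by apply: wspace_seteq; apply: simg_seteq => x; split => /ezm.
Qed.

End BRAlgebra.

Theorem lemma3p13
  (k : fieldType) (R : comAlgType k)
  (R_domain : forall a b : R, a * b = 0 -> a = 0 \/ b = 0)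
  (sigma : {lrmorphism R -> R}) (sigmainv : R -> R)
  (sK : cancel sigma sigmainv) (sK' : cancel sigmainv sigma)
  (H J : R -> Prop) (HH : is_ideal H) (HJ : is_ideal J)
  (Inz : forall z : int, exists x, Ik sigma sigmainv H J z x /\ x <> 0)
  (n : nat) (n_gt0 : (0 < n)%N)
  (sigma_n : forall x, iter n sigma x = x)
  (m0 : R -> Prop) (m0_max : is_maximal m0)
  (orbit_size : forall i j : nat, (i < n)%N -> (j < n)%N ->
      seteq (simg sigma sigmainv (Posz i) m0) (simg sigma sigmainv (Posz j) m0) ->
      i = j)
  (no_breaks : forall z : int,
      ~ ssubset (idmul H J) (simg sigma sigmainv 1 (simg sigma sigmainv z m0)))
  (M : zmodType) (act : int -> R -> M -> M)
  (Mmod : is_BR_module sigma sigmainv H J act)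
  (Msimple : is_simple_B_module sigma sigmainv H J act)
  (Mweight : is_weight_module act)
  (Msupp : forall m, is_maximal m -> (exists v, wspace act m v /\ v <> 0) ->
      exists z : int, seteq m (simg sigma sigmainv z m0)) :
  forall m, (exists z : int, seteq m (simg sigma sigmainv z m0)) ->
    is_simple_Lambda_module sigma sigmainv H J n act (wspace act m) /\
    forall i : int,
      twisted_iso sigma sigmainv H J n act i (wspace act m)
        (wspace act (simg sigma sigmainv i m)).
Proof.
exact: (orbit_weight_structure sK sK' n_gt0 sigma_n Mmod HH HJ m0_max no_breaks
  Msimple Mweight Msupp orbit_size).
Qed.
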